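(* Let $\mathcal{C}$ be an $[n,k,d]_q$ linear code with two $(r_i,\delta_i)_{i\in\{1,2\}}$ localities with respect to the sets $\mathcal{T}_1$, $\mathcal{T}_2=[n]\setminus\mathcal{T}_1$, where $n_i=|\mathcal{T}_i|$, $r_1\le r_2$ and $\delta_1\ge\delta_2\ge 2$. Put $\Delta=\lceil n_1/(r_1+\delta_1-1)\rceil(\delta_1-1)$. Suppose that $r_1\lceil n_1/(r_1+\delta_1-1)\rceil\le k-1$ and $r_1\lceil(\Delta-1)/(\delta_1-1)\rceil+(\Delta-1)<n_1$. Then $$\Phi(x)\le r_1\left\lceil\frac{x}{\delta_1-1}\right\rceil+x \quad\text{for } 0\le x\le\Delta,$$ and $$\Phi(x)\le r_1\left\lceil\frac{n_1}{r_1+\delta_1-1}\right\rceil+r_2\left\lceil\frac{x-\Delta}{\delta_2-1}\right\rceil+x\quad\text{for } \Delta\le x\le\rho+1,$$ where $\rho=\max\{x:\Phi(x)-x<k\}$.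
   Context: $[n]=\{1,\dots,n\}$. For an $[n,k,d]_q$ linear code $\mathcal{C}$ with generator matrix $G$ whose columns are $\vec g_1,\dots,\vec g_n$, a regenerating set of coordinate $i$ is a subset $R\subseteq[n]$ with $i\in R$ such that $\vec g_i$ is an $\mathbb{F}_q$-linear combination of $\{\vec g_j\}_{j\in R\setminus\{i\}}$; regenerating sets are always taken to be minimal (no proper subset $R'\subsetneq R\setminus\{i\}$ has $\vec g_i$ in the span of $\{\vec g_j\}_{j\in R'}$). $\mathcal{R}_i$ denotes the collection of all regenerating sets of coordinate $i$. A sequence $R_1,\dots,R_m$ with $R_t\in\mathcal{R}_{l_t}$, $l_t\in[n]$, has a nontrivial union if $l_j\notin\bigcup_{t=1}^{j-1}R_t$ for all $1\le j\le m$. Define $\Phi(0)=0$ and, for $x\ge1$, $\Phi(x)=\min\{|\bigcup_{t=1}^xR_t| : R_t\in\mathcal{R}_{l_t},\ R_1,\dots,R_x\text{ have a nontrivial union}\}$. Two $(r_i,\delta_i)_{i\in\{1,2\}}$ localities: $\mathcal{T}_1\subseteq[n]$, $\mathcal{T}_2=[n]\setminus\mathcal{T}_1$, $r_1\le r_2$, $\delta_1\ge\delta_2\ge2$ integers, and for $i=1,2$ and each $\iota\in\mathcal{T}_i$ there is $S_\iota\subseteq\mathcal{T}_i$ with $\iota\in S_\iota$, $\delta_i\le|S_\iota|\le r_i+\delta_i-1$, such that for every $E\subseteq S_\iota$ with $|E|=\delta_i-1$ and every $j\in E$, $(S_\iota\setminus E)\cup\{j\}\in\mathcal{R}_j$.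 *)

From HB Require Import structures.
From mathcomp Require Import all_boot all_order all_algebra.
Set Implicit Arguments. Unset Strict Implicit. Unset Printing Implicit Defensive.
Import GRing.Theory Num.Theory.

Section Codes.
Variables (F : finFieldType) (k n : nat).
Implicit Types (G : 'M[F]_(k, n)).

Definition wt (v : 'rV[F]_n) : nat := #|[set j : 'I_n | v ord0 j != 0%R]|.

Definition is_min_dist G (d : nat) : Prop :=
  (exists2 u : 'rV[F]_k, (u != 0)%R & wt (u *m G) = d) /\
  (forall u : 'rV[F]_k, (u != 0)%R -> d <= wt (u *m G)).

Definition in_span G (S : {set 'I_n}) (i : 'I_n) : bool :=
  [exists c : {ffun 'I_n -> F}, col i G == (\sum_(j in S) c j *: col j G)%R].

Definition regen G (i : 'I_n) (R : {set 'I_n}) : bool :=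
  [&& i \in R, in_span G (R :\ i) i &
      [forall R' : {set 'I_n}, (R' \proper (R :\ i)) ==> ~~ in_span G R' i]].

Definition nontriv_union G (x : nat) (t : x.-tuple ('I_n * {set 'I_n})) : bool :=
  [forall j : 'I_x, regen G (tnth t j).1 (tnth t j).2 &&
     ((tnth t j).1 \notin \bigcup_(s : 'I_x | s < j) (tnth t s).2)].

Definition union_of (x : nat) (t : x.-tuple ('I_n * {set 'I_n})) : {set 'I_n} :=
  \bigcup_(s : 'I_x) (tnth t s).2.

(* Phi(x) as an extended natural: None = +oo (min over an empty family) *)
Definition Phi G (x : nat) : option nat :=
  if [pick t : x.-tuple ('I_n * {set 'I_n}) | nontriv_union G t] is Some t0 then
    Some #|union_of [arg min_(t < t0 | nontriv_union G t) #|union_of t|]|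
  else None.

Definition locality G (T : {set 'I_n}) (r delta : nat) : Prop :=
  forall iota, iota \in T -> exists S : {set 'I_n},
    [/\ S \subset T, iota \in S, delta <= #|S|, #|S| <= r + delta - 1 &
        forall E : {set 'I_n}, E \subset S -> #|E| = delta - 1 ->
          forall j, j \in E -> regen G j ((S :\: E) :|: [set j])].

End Codes.

Definition ceiln (a b : nat) : nat := (a + b.-1) %/ b.
Definition ceilz (a b : int) : int := (- ((- a) %/ b)%Z)%R.

From HB Require Import structures.
From mathcomp Require Import all_boot all_order all_algebra zify.
Import GRing.Theory Num.Theory.
Set Implicit Arguments.
Unset Strict Implicit.
Unset Printing Implicit Defensive.

(** The bounds come from explicit families of regenerating sets with a
    nontrivial union, built greedily from the local groups.  Picking an
    uncovered coordinate [i] of [T1] and an erasure pattern [E] of size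
    [delta1 - 1] containing [i] inside its local group [S], the set
    [(S :\: E) :|: [set i]] regenerates [i] at the price of at most [r1 + 1]
    new coordinates, after which every other member [j] of [E] is regenerated
    by [(S :\: E) :|: [set j]] at the price of one coordinate.  Hence each
    block of [delta1 - 1] steps costs at most [r1] coordinates beyond the
    steps themselves, and the hypothesis on [Delta] guarantees that [T1] is
    not exhausted during the first [Delta] steps.  Afterwards the same
    process runs over all coordinates with the weaker parameters
    [(r2, delta2)].  Should it cover all [n] coordinates too early, the
    bound exceeds [n], which still bounds [Phi x] for [x <= rho + 1]: the
    heads of a nontrivial union are spanned by the remaining columns, so
    [rank G + x <= n], and therefore a family realising [Phi rho] leaves a
    coordinate uncovered and extends by one more regenerating set. *)

Lemma leq_ceiln a b c : a <= b -> ceiln a c <= ceiln b c.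
Proof. by move=> le_ab; rewrite leq_div2r ?leq_add2r. Qed.

Lemma ceilnMl a b : 0 < b -> ceiln (a * b) b = a.
Proof.
by move=> b_gt0; rewrite /ceiln divnMDl // divn_small ?addn0 // ltn_predL.
Qed.

Lemma ceiln_bounds a b : 0 < b -> a <= ceiln a b * b < a + b.
Proof.
move=> b_gt0; rewrite /ceiln.
have := leq_divM (a + b.-1) b; have := ltn_ceil (a + b.-1) b_gt0.
lia.
Qed.

Lemma ceilz_nat a b : 0 < b -> (ceilz a%:Z b%:Z = (ceiln a b)%:Z)%R.
Proof.
move=> b_gt0; have /andP [lo hi] := ceiln_bounds a b_gt0; rewrite /ceilz.
have -> : (- a%:Z = - (ceiln a b)%:Z * b%:Z + (ceiln a b * b - a)%:Z)%R.
  by rewrite -subzn // PoszM; lia.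
rewrite divzMDl ?divz_small; last 2 first.
- by apply/andP; split; rewrite // ltz_nat; lia.
- by rewrite eqz_nat -lt0n.
by rewrite addr0 opprK.
Qed.

Lemma ltn_add_ceiln_below r b D N : 0 < b ->
  (r%:Z * ceilz (D%:Z - 1) b%:Z + (D%:Z - 1) < N%:Z)%R ->
  forall x, x < D -> x + r * ceiln x b < N.
Proof.
move=> b_gt0 room x lt_xD.
have D1 : (D%:Z - 1 = (D - 1)%:Z)%R by rewrite -subzn //; lia.
rewrite D1 ceilz_nat // -PoszM -PoszD ltz_nat in room.
have le_x : x <= D - 1 by lia.
have := leq_mul (leqnn r) (leq_ceiln b le_x); lia.
Qed.

Section RegeneratingSequences.
Variables (F : finFieldType) (k n : nat) (G : 'M[F]_(k, n)).
Local Notation pair := ('I_n * {set 'I_n})%type.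

Fixpoint nontriv_from (A : {set 'I_n}) (s : seq pair) : bool :=
  if s is p :: s' then
    [&& regen G p.1 p.2, p.1 \notin A & nontriv_from (A :|: p.2) s']
  else true.

Definition covered (s : seq pair) : {set 'I_n} := \bigcup_(p <- s) p.2.

Lemma covered_cons p s : covered (p :: s) = p.2 :|: covered s.
Proof. by rewrite /covered big_cons. Qed.

Lemma covered_rcons s p : covered (rcons s p) = covered s :|: p.2.
Proof. by rewrite /covered -cats1 big_cat big_seq1. Qed.

Lemma regen_mem i R : regen G i R -> i \in R.
Proof. by case/and3P. Qed.

Lemma nontriv_from_rcons A s p : nontriv_from A s -> regen G p.1 p.2 ->
  p.1 \notin A :|: covered s -> nontriv_from A (rcons s p).
Proof.
elim: s A => [|q s IHs] A /=.
  by rewrite /covered big_nil setU0 => _ -> ->.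
by case/and3P=> -> -> nt_s reg_p; rewrite covered_cons setUA; apply: IHs.
Qed.

Lemma nontriv_from_catl A s1 s2 :
  nontriv_from A (s1 ++ s2) -> nontriv_from A s1.
Proof.
by elim: s1 A => [|q s IHs] A //= /and3P [-> -> /IHs].
Qed.

Lemma nontriv_from_notin A s q : nontriv_from A s -> q \in s -> q.1 \notin A.
Proof.
elim: s A => [|p s IHs] A //= /and3P [_ pA nt_s].
rewrite inE => /predU1P [-> //|q_s].
by have := IHs _ nt_s q_s; rewrite in_setU negb_or => /andP [].
Qed.

Lemma nontriv_from_uniq A s : nontriv_from A s -> uniq (unzip1 s).
Proof.
elim: s A => [|p s IHs] A //= /and3P [reg_p _ nt_s]; rewrite (IHs _ nt_s) andbT.
apply/mapP=> -[q q_s eq_pq].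
have := nontriv_from_notin nt_s q_s.
by rewrite -eq_pq in_setU (regen_mem reg_p) orbT.
Qed.

Lemma nontriv_from_nth d A s : nontriv_from A s <->
  (forall j, j < size s -> regen G (nth d s j).1 (nth d s j).2 &&
     ((nth d s j).1 \notin A :|: \bigcup_(i < j) (nth d s i).2)).
Proof.
have peel p s' A' j : A' :|: \bigcup_(i < j.+1) (nth d (p :: s') i).2 =
    (A' :|: p.2) :|: \bigcup_(i < j) (nth d s' i).2.
  by rewrite big_ord_recl setUA.
elim: s A => [|p s IHs] A /=; first by [].
split=> [/and3P [reg_p pA /IHs nt_s] [|j] /= lt_j|nt].
- by rewrite big_ord0 setU0 reg_p.
- by rewrite peel nt_s.
have /andP [reg_p] := nt 0 isT; rewrite big_ord0 setU0 => pA.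
rewrite reg_p pA; apply/IHs=> j lt_j.
by have := nt j.+1 lt_j; rewrite peel.
Qed.

Lemma nontriv_unionE x (t : x.-tuple pair) :
  nontriv_union G t = nontriv_from set0 t.
Proof.
case: x t => [|x] t; first by rewrite tuple0; apply/forallP=> -[].
have d := tnth t ord0.
have bigE (j : 'I_x.+1) : \bigcup_(i : 'I_x.+1 | i < j) (tnth t i).2 =
    \bigcup_(i < j) (nth d t i).2.
  rewrite (big_ord_widen _ (fun i => (nth d t i).2) (ltnW (ltn_ord j))).
  by apply: eq_bigr => i _; rewrite (tnth_nth d).
apply/idP/idP => [/forallP nt|/(nontriv_from_nth d) nt].
  apply/(nontriv_from_nth d) => j; rewrite size_tuple => lt_j.
  have := nt (Ordinal lt_j).
  by rewrite bigE (tnth_nth d) set0U.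
apply/forallP=> j; rewrite bigE (tnth_nth d).
by rewrite -(set0U (\bigcup_(i < j) _)) nt ?size_tuple.
Qed.

Lemma union_ofE x (t : x.-tuple pair) : union_of t = covered t.
Proof. by rewrite /union_of /covered big_tuple. Qed.

Lemma Phi_le_covered s : nontriv_from set0 s ->
  exists2 p, Phi G (size s) = Some p & p <= #|covered s|.
Proof.
move=> nt_s; have nt_t : nontriv_union G (in_tuple s) by rewrite nontriv_unionE.
rewrite /Phi; case: pickP => [t0 nt_t0|/(_ (in_tuple s))]; last by rewrite nt_t.
case: arg_minnP => // t _ min_t; eexists; first by [].
by have := min_t _ nt_t; rewrite !union_ofE.
Qed.

Lemma Phi_witness x p : Phi G x = Some p ->
  exists s, [/\ size s = x, nontriv_from set0 s & #|covered s| = p].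
Proof.
rewrite /Phi; case: pickP => [t0 nt_t0|//]; case: arg_minnP => // t nt_t _ [<-].
by exists t; rewrite size_tuple -nontriv_unionE union_ofE.
Qed.

Lemma Phi_prefix s x : nontriv_from set0 s -> x <= size s ->
  exists2 p, Phi G x = Some p & p <= n.
Proof.
move=> nt_s le_x; rewrite -(cat_take_drop x s) in nt_s.
have [p Phi_x le_p] := Phi_le_covered (nontriv_from_catl nt_s).
rewrite size_takel // in Phi_x; exists p => //.
by rewrite (leq_trans le_p) // (leq_trans (max_card _)) ?card_ord.
Qed.

Lemma in_span_submx m (M : 'M[F]_(m, k)) S i : in_span G S i ->
  (forall j, j \in S -> (row j G^T <= M)%MS) -> (row i G^T <= M)%MS.
Proof.
case/existsP=> c /eqP col_i S_M; rewrite -tr_col col_i raddf_sum /=.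
by apply: summx_sub => j S_j; rewrite linearZ /= tr_col scalemx_sub ?S_M.
Qed.

Lemma nontriv_from_rows_submx A s m (M : 'M[F]_(m, k)) : nontriv_from A s ->
  (forall i, i \notin unzip1 s -> (row i G^T <= M)%MS) ->
  forall i, (row i G^T <= M)%MS.
Proof.
elim: s A => [|p s IHs] A /=; first by move=> _ M_rows i; apply: M_rows.
case/and3P=> /and3P [_ span_p _] _ nt_s M_rows; apply: (IHs _ nt_s) => i.
have [-> _|ne_ip s'_i] := eqVneq i p.1; last first.
  by apply: M_rows; rewrite inE negb_or ne_ip.
apply: in_span_submx span_p _ => j /setD1P [ne_jp p_j]; apply: M_rows.
rewrite inE negb_or ne_jp; apply/mapP=> -[q q_s eq_jq].
by have := nontriv_from_notin nt_s q_s; rewrite -eq_jq in_setU p_j orbT.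
Qed.

Lemma rank_add_size_le A s : nontriv_from A s -> \rank G + size s <= n.
Proof.
move=> nt_s; set L := [set i in unzip1 s].
have card_L : #|L| = size s.
  by rewrite cardsE (card_uniqP (nontriv_from_uniq nt_s)) size_map.
pose M := rowsub (fun i : 'I_#|~: L| => enum_val i) G^T.
have rows_M : forall i, (row i G^T <= M)%MS.
  apply: (nontriv_from_rows_submx nt_s) => i i_L.
  have iL : i \in ~: L by rewrite !inE.
  by rewrite -(enum_rankK_in iL iL) -row_rowsub row_sub.
have := mxrankS (introT row_subP rows_M); rewrite mxrank_tr.
have := rank_leq_row M; have := cardsC L; rewrite card_ord card_L.
lia.
Qed.

Lemma nontriv_extend x p : (forall i, exists R, regen G i R) ->
  Phi G x = Some p -> p - x < \rank G ->
  exists2 s, size s = x.+1 & nontriv_from set0 s.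
Proof.
move=> regen_all /Phi_witness [s [size_s nt_s card_s]] lt_px.
case: (pickP [pred a | a \notin covered s]) => [a /= a_s|covered_all].
  have [R reg_R] := regen_all a; exists (rcons s (a, R)).
    by rewrite size_rcons size_s.
  by apply: nontriv_from_rcons; rewrite ?set0U.
have cov_all : [set: 'I_n] \subset covered s.
  by apply/subsetP=> a _; apply/negbNE/negbT/covered_all.
have := subset_leq_card cov_all; rewrite cardsT card_ord card_s.
have := rank_add_size_le nt_s; lia.
Qed.

End RegeneratingSequences.

Lemma exists_subset_card (T : finType) (A B : {set T}) c :
  A \subset B -> #|A| <= c <= #|B| ->
  exists E : {set T}, [/\ A \subset E, E \subset B & #|E| = c].
Proof.
elim: c => [|c IHc] sAB /andP [leAc lecB].
  by exists A; split=> //; apply/eqP; rewrite -leqn0.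
have [le_Ac|lt_cA] := leqP #|A| c; last first.
  by exists A; split=> //; apply/eqP; rewrite eqn_leq leAc.
have [E [sAE sEB cardE]] := IHc sAB (introT andP (conj le_Ac (ltnW lecB))).
have [b] : exists b, b \in B :\: E.
  by apply/set0Pn; rewrite -card_gt0 cardsD (setIidPr sEB) subn_gt0 cardE.
case/setDP=> B_b E'_b; exists (b |: E); split.
- exact: subset_trans sAE (subsetUr _ _).
- by rewrite subUset sub1set B_b.
- by rewrite cardsU1 E'_b cardE.
Qed.

Section LocalGroups.
Variables (F : finFieldType) (k n : nat) (G : 'M[F]_(k, n)).

(** Locality in the form consumed by the greedy construction: relative to
    the covered set [U], the coordinate [i] lies in a group [E] of at least
    [m] coordinates, each regenerated by itself and the at most [r]
    coordinates of [S :\: E].  Either [E] avoids [U] (opening it costs [r]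
    new coordinates but makes the rest of [E] cheap), or [E] contains every
    uncovered coordinate of [S] (so regenerating [i] costs only [i]). *)
Definition local_groups (D : {set 'I_n}) (r m : nat) : Prop :=
  forall i (U : {set 'I_n}), i \in D -> i \notin U -> exists S E : {set 'I_n},
    [/\ i \in E, #|S :\: E| <= r, m <= #|E|,
        forall j, j \in E -> regen G j ((S :\: E) :|: [set j]) &
        [disjoint E & U] \/ S :\: U \subset E].

Lemma locality_local_groups T r delta :
  locality G T r delta -> 1 < delta -> local_groups T r (delta - 1).
Proof.
move=> loc_T delta_gt1 i U T_i U'_i.
have [S [_ S_i ge_S le_S reg_S]] := loc_T i T_i.
suff [E [sES E_i cardE choice_E]] : exists E : {set 'I_n}, [/\ E \subset S,
    i \in E, #|E| = delta - 1 & [disjoint E & U] \/ S :\: U \subset E].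
  exists S, E; split=> //; last by move=> j; apply: reg_S.
  - by rewrite cardsD (setIidPr sES) cardE; lia.
  - by rewrite cardE.
have SU_i : i \in S :\: U by rewrite in_setD U'_i S_i.
(* Take [E] among the uncovered coordinates of [S] if there are enough of
   them, and otherwise make [E] swallow all of them. *)
have [le_dSU|lt_SUd] := leqP (delta - 1) #|S :\: U|.
  have le_1d : #|[set i]| <= delta - 1 by rewrite cards1; lia.
  have iSU : [set i] \subset S :\: U by rewrite sub1set.
  have [E [iE sE cardE]] :=
    exists_subset_card iSU (introT andP (conj le_1d le_dSU)).
  exists E; split=> //; first exact: subset_trans sE (subsetDl _ _).
    by rewrite -sub1set.
  by left; rewrite disjoints_subset (subset_trans sE) // setDE subsetIr.
have le_dS : delta - 1 <= #|S| by lia.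
have [E [sSUE sES cardE]] := exists_subset_card (subsetDl S U)
  (introT andP (conj (ltnW lt_SUd) le_dS)).
by exists E; split=> //; [exact: subsetP sSUE _ SU_i | right].
Qed.

Lemma local_groupsU D1 D2 r m : local_groups D1 r m -> local_groups D2 r m ->
  local_groups (D1 :|: D2) r m.
Proof. by move=> grp1 grp2 i U /setUP [/grp1|/grp2]; apply. Qed.

Lemma local_groups_mono D r r' m m' : r <= r' -> m' <= m ->
  local_groups D r m -> local_groups D r' m'.
Proof.
move=> le_r le_m grp i U D_i U'_i.
have [S [E [E_i le_SE ge_E reg_E choice_E]]] := grp i U D_i U'_i.
by exists S, E; split=> //; [exact: leq_trans le_r | exact: leq_trans ge_E].
Qed.

Lemma local_groups_regen D r m i : local_groups D r m -> i \in D ->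
  exists R, regen G i R.
Proof.
move=> grp D_i.
have [S [E [E_i _ _ reg_E _]]] := grp i set0 D_i (negbT (in_set0 i)).
by exists ((S :\: E) :|: [set i]); apply: reg_E.
Qed.

End LocalGroups.

Section Greedy.
Variables (F : finFieldType) (k n : nat) (G : 'M[F]_(k, n)).
Local Notation pair := ('I_n * {set 'I_n})%type.

(** [s] is the sequence built so far, in a phase that started at length [x0]
    with [C0] coordinates of extra cost; every coordinate of [pend] is
    regenerable from the covered set plus itself, and [g] counts the groups
    opened at the full price [r].  Each opened group is credited with [m]
    steps, of which at most [m - 1] may still be pending. *)
Record greedy_state (x0 C0 r m : nat) (s : seq pair) (pend : {set 'I_n})
    (g : nat) : Prop := GreedyState {
  greedy_nontriv : nontriv_from G set0 s;
  greedy_disjoint : [disjoint pend & covered s];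
  greedy_pending : forall j, j \in pend ->
    exists2 R, regen G j R & R \subset j |: covered s;
  greedy_cost : #|covered s| <= size s + C0 + r * g;
  greedy_groups : g * m + x0 <= size s + minn #|pend| m.-1 }.

Lemma greedy_state0 C0 r m : greedy_state 0 C0 r m [::] set0 0.
Proof.
split=> //; first by rewrite -setI_eq0 set0I.
  by move=> j; rewrite inE.
by rewrite /covered big_nil cards0.
Qed.

Lemma greedy_state_rebase x0 C0 r m s pend g C0' r' m' :
  greedy_state x0 C0 r m s pend g -> #|covered s| <= size s + C0' ->
  greedy_state (size s) C0' r' m' s pend 0.
Proof.
by case=> nt_s dis pending _ _ cost; split; rewrite ?muln0 ?addn0 ?leq_addr.
Qed.

Lemma greedy_cost_ceiln x0 C0 r m s pend g : 0 < m ->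
  greedy_state x0 C0 r m s pend g ->
  #|covered s| <= size s + C0 + r * ceiln (size s - x0) m.
Proof.
move=> m_gt0 [_ _ _ cost groups]; apply: leq_trans cost _.
rewrite leq_add2l leq_mul2l leq_divRL //; have := geq_minr #|pend| m.-1; lia.
Qed.

Section Steps.
Variables (x0 C0 r m : nat).
Local Notation state := (greedy_state x0 C0 r m).

Lemma greedy_pending_step s pend g j : state s pend g -> j \in pend ->
  exists s' pend', state s' pend' g /\ size s' = (size s).+1.
Proof.
case=> nt_s dis pending cost groups pend_j.
have [R reg_R sR] := pending j pend_j.
have s'_j : j \notin covered s by rewrite (disjointFr dis pend_j).
have sU : covered (rcons s (j, R)) \subset j |: covered s.
  by rewrite covered_rcons subUset sR subsetUr.
have le_U : #|covered (rcons s (j, R))| <= (#|covered s|).+1.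
  by rewrite (leq_trans (subset_leq_card sU)) // cardsU1 s'_j.
exists (rcons s (j, R)), (pend :\ j); rewrite size_rcons; split=> //; split.
- by apply: nontriv_from_rcons; rewrite ?set0U.
- rewrite disjoints_subset; apply/subsetP=> z /setD1P [ne_zj pend_z].
  rewrite inE; apply/negP=> /(subsetP sU) /setU1P [eq_zj|s_z].
    by rewrite eq_zj eqxx in ne_zj.
  by rewrite (disjointFr dis pend_z) in s_z.
- move=> j' /setD1P [_ /pending [R' reg_R' sR']]; exists R' => //.
  by rewrite (subset_trans sR') // setUS // covered_rcons subsetUl.
- by rewrite size_rcons; lia.
- have := cardsD1 j pend; rewrite pend_j size_rcons; lia.
Qed.

Lemma greedy_open_step D s g i : local_groups G D r m -> state s set0 g ->
  i \in D -> i \notin covered s ->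
  exists s' pend' g', state s' pend' g' /\ size s' = (size s).+1.
Proof.
move=> grp [nt_s _ _ cost groups] D_i s'_i.
have [S [E [E_i le_SE ge_E reg_E choice_E]]] := grp i (covered s) D_i s'_i.
rewrite cards0 min0n addn0 in groups.
set U := covered s in s'_i cost choice_E *.
set R := (S :\: E) :|: [set i]; set s' := rcons s (i, R).
set pend' := (E :\: U) :\ i.
have cov' : covered s' = U :|: R by rewrite covered_rcons.
suff grow g' : #|covered s'| <= (size s).+1 + C0 + r * g' ->
    g' * m + x0 <= (size s).+1 + minn #|pend'| m.-1 ->
    exists s'' pend'' g'', state s'' pend'' g'' /\ size s'' = (size s).+1.
  case: choice_E => [dis_EU|sSUE].
    apply: (grow g.+1).
      have le_R : #|R| <= r.+1.
        by rewrite (leq_trans (leq_card_setU _ _)) // cards1 addn1.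
      rewrite cov' mulnS (leq_trans (leq_card_setU _ _)) //; lia.
    have sE : E :\ i \subset pend'.
      by apply: setSD; rewrite setDE subsetI subxx -disjoints_subset.
    have := subset_leq_card sE; have := cardsD1 i E; rewrite E_i; lia.
  apply: (grow g); last by lia.
  have sRU : covered s' \subset i |: U.
    rewrite cov' subUset subsetUr subUset sub1set setU11 andbT.
    apply/subsetP=> z /setDP [S_z E'_z]; rewrite in_setU1.
    apply/orP; right; apply: contraR E'_z => U'_z.
    by apply: (subsetP sSUE); rewrite inE U'_z.
  by have := subset_leq_card sRU; rewrite cardsU1 s'_i; lia.
move=> cost' groups'; exists s', pend', g'; rewrite size_rcons; split=> //.
split=> //; rewrite ?size_rcons //.
- by apply: nontriv_from_rcons; rewrite ?reg_E ?set0U.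
- rewrite disjoints_subset cov'.
  apply/subsetP=> z /setD1P [ne_zi /setDP [E_z U'_z]].
  by rewrite !inE negb_or U'_z E_z ne_zi.
- move=> j /setD1P [_ /setDP [E_j _]].
  exists ((S :\: E) :|: [set j]); first exact: reg_E.
  by rewrite setUC setUS // cov' subsetU // subsetUl orbT.
Qed.

Lemma greedy_step D s pend g : local_groups G D r m -> state s pend g ->
  ~~ (D \subset covered s) ->
  exists s' pend' g', state s' pend' g' /\ size s' = (size s).+1.
Proof.
move=> grp st D_s; have [pend0|[j pend_j]] := set_0Vmem pend; last first.
  have [s' [pend' step]] := greedy_pending_step st pend_j.
  by exists s', pend', g.
have [i /setDP [D_i s'_i]] : exists i, i \in D :\: covered s.
  by apply/set0Pn; rewrite setD_eq0.
by rewrite pend0 in st; apply: greedy_open_step grp st D_i s'_i.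
Qed.

Lemma greedy_run D s pend g x : local_groups G D r m -> state s pend g ->
  size s <= x -> exists s' pend' g', state s' pend' g' /\
    (size s' = x \/ size s' < x /\ D \subset covered s').
Proof.
move=> grp st /subnKC <-.
elim: (x - size s) => [|y [s' [pend' [g' [st' run]]]]].
  by exists s, pend, g; split; last by left; rewrite addn0.
case: run => [size_s'|[lt_s' D_s']]; last first.
  by exists s', pend', g'; split; last by right; rewrite addnS ltnS ltnW.
have [D_s'|/(greedy_step grp st') [s'' [pend'' [g'' [st'' size_s'']]]]] :=
  boolP (D \subset covered s').
  by exists s', pend', g'; split; last by right; rewrite size_s' addnS ltnSn.
by exists s'', pend'', g''; split; last by left; rewrite size_s'' size_s' addnS.
Qed.

End Steps.

End Greedy.

Section Bounds.
Variables (F : finFieldType) (k n : nat) (G : 'M[F]_(k, n)).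

Lemma greedy_reach D r m Delta : local_groups G D r m -> 0 < m ->
  (forall x, x < Delta -> x + r * ceiln x m < #|D|) ->
  forall x, x <= Delta ->
  exists s pend g, greedy_state G 0 0 r m s pend g /\ size s = x.
Proof.
move=> grp m_gt0 room x le_xD.
have [s [pend [g [st [size_s|[lt_sx D_s]]]]]] :=
  greedy_run grp (greedy_state0 G 0 r m) (leq0n x); first by exists s, pend, g.
have := greedy_cost_ceiln m_gt0 st; have := room _ (leq_trans lt_sx le_xD).
have := subset_leq_card D_s; rewrite subn0; lia.
Qed.

Lemma greedy_Phi_le C0 r m s pend g X : local_groups G setT r m -> 0 < m ->
  greedy_state G (size s) C0 r m s pend g ->
  (exists2 s1, size s1 = X & nontriv_from G set0 s1) ->
  forall x, size s <= x <= X ->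
  exists2 p, Phi G x = Some p & p <= C0 + r * ceiln (x - size s) m + x.
Proof.
move=> grp m_gt0 st [s1 size_s1 nt_s1] x /andP [le_sx le_xX].
have [s' [pend' [g' [st' [size_s'|[lt_s'x cov_s']]]]]] :=
  greedy_run grp st le_sx.
  have [p Phi_x le_p] := Phi_le_covered (greedy_nontriv st').
  rewrite size_s' in Phi_x; exists p => //.
  have := greedy_cost_ceiln m_gt0 st'; rewrite size_s'; lia.
have le_xs1 : x <= size s1 by rewrite size_s1.
have [p Phi_x le_pn] := Phi_prefix nt_s1 le_xs1.
exists p => //; have := greedy_cost_ceiln m_gt0 st'.
have := leq_mul (leqnn r) (leq_ceiln m (leq_sub2r (size s) (ltnW lt_s'x))).
have := subset_leq_card cov_s'; rewrite cardsT card_ord; lia.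
Qed.

End Bounds.

Theorem lemma1 (F : finFieldType) (n k d : nat) (G : 'M[F]_(k, n))
  (T1 : {set 'I_n}) (r1 r2 delta1 delta2 rho : nat) :
  \rank G = k ->
  is_min_dist G d ->
  r1 <= r2 -> delta2 <= delta1 -> 2 <= delta2 ->
  locality G T1 r1 delta1 ->
  locality G (~: T1) r2 delta2 ->
  let n1 := #|T1| in
  let Delta := ceiln n1 (r1 + delta1 - 1) * (delta1 - 1) in
  r1 * ceiln n1 (r1 + delta1 - 1) <= k - 1 ->
  (r1%:Z * ceilz (Delta%:Z - 1) (delta1 - 1)%:Z + (Delta%:Z - 1) < n1%:Z)%R ->
  (* rho = max { x : Phi(x) - x < k } *)
  (exists2 p, Phi G rho = Some p & p - rho < k) ->
  (forall x p, Phi G x = Some p -> p - x < k -> x <= rho) ->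
  (forall x, x <= Delta ->
     exists2 p, Phi G x = Some p & p <= r1 * ceiln x (delta1 - 1) + x) /\
  (forall x, Delta <= x <= rho.+1 ->
     exists2 p, Phi G x = Some p &
       p <= r1 * ceiln n1 (r1 + delta1 - 1)
            + r2 * ceiln (x - Delta) (delta2 - 1) + x).
Proof.
move=> rkG _ le_r12 le_d12 d2_gt1 loc1 loc2 n1 Delta _ room [p Phi_rho lt_p] _.
have d1_gt1 : 1 < delta1 := leq_trans d2_gt1 le_d12.
have m1_gt0 : 0 < delta1 - 1 by rewrite subn_gt0.
have m2_gt0 : 0 < delta2 - 1 by rewrite subn_gt0.
have grp1 := locality_local_groups loc1 d1_gt1.
have grpT : local_groups G setT r2 (delta2 - 1).
  rewrite -(setUCr T1).
  apply: local_groupsU (locality_local_groups loc2 d2_gt1).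
  exact: local_groups_mono le_r12 (leq_sub2r 1 le_d12) grp1.
have phase1 := greedy_reach grp1 m1_gt0 (ltn_add_ceiln_below m1_gt0 room).
split=> [x /phase1 [s [pend [g [st <-]]]]|].
  have [q Phi_s le_q] := Phi_le_covered (greedy_nontriv st); exists q => //.
  by have := greedy_cost_ceiln m1_gt0 st; rewrite subn0 addn0 addnC; lia.
have [s [pend [g [st size_s]]]] := phase1 Delta (leqnn _).
have cost1 : #|covered s| <= size s + r1 * ceiln n1 (r1 + delta1 - 1).
  by have := greedy_cost_ceiln m1_gt0 st; rewrite {2}size_s subn0 addn0 ceilnMl.
have st2 := greedy_state_rebase r2 (delta2 - 1) st cost1.
have lt_p_rk : p - rho < \rank G by rewrite rkG.
have nt_rho1 := nontriv_extend (fun i => local_groups_regen grpT (in_setT i))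
  Phi_rho lt_p_rk.
by rewrite -size_s; apply: greedy_Phi_le grpT m2_gt0 st2 nt_rho1.
Qed.
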